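(* Let $p$ be an odd prime and $\alpha>1$ any integer with $\gcd(p,\alpha)=1$. Then for all positive integers $a$, $$S_p^1(a)\leq 4\, a^{\log_p\left(\frac{p+1}{2}\right)} .$$
   Context: A base-$p$ digit $d\in\{0,\dots,p-1\}$ is called small if $d<p/2$ and large otherwise. For integers $a,n\ge1$, $S_p^n(a)=\#\{0\le s<a : \text{the base-}p\text{ representation of }\alpha^s\text{ contains fewer than } n \text{ large digits}\}$ (this depends on the fixed $\alpha$). *)

From Stdlib Require Import Reals Arith List Lia.

(* Base-p digits of n, least significant first (empty list for n = 0).
   [fuel] bounds the recursion; [n] itself suffices as fuel for p >= 2. *)
Fixpoint digits_aux (fuel p n : nat) : list nat :=
  match fuel with
  | O => nil
  | S f => match n with
           | O => nil
           | _ => (n mod p) :: digits_aux f p (n / p)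
           end
  end.

Definition digits (p n : nat) : list nat := digits_aux n p n.

Definition large_digit (p d : nat) : bool := Nat.leb p (2 * d).

Definition num_large_digits (p n : nat) : nat :=
  length (filter (large_digit p) (digits p n)).

Definition S_count (alpha p n a : nat) : nat :=
  length (filter (fun s => Nat.ltb (num_large_digits p (alpha ^ s)) n) (seq 0 a)).

(* Write beta = alpha^(p-1) = 1 + p^nu u with p not dividing u.  Lifting the
   exponent gives alpha^(s + e (p-1) p^m) = alpha^s (1 + e u p^(nu+m)) modulo
   p^(nu+m+1): along the residue class of s modulo (p-1) p^m, the digits of
   alpha^s at positions nu, ..., nu+m-1 are frozen while the digit at position
   nu+m runs through all residues as e runs through 0..p-1.  Only h = (p+1)/2 of
   them are small, so the number of s < (p-1) p^m whose window of m digits is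
   small is at most (p-1) h^m, and S_p^1(a) is bounded by such counts.  The
   passage from (p-1) h^m min(h, q) with (q-1) (p-1) p^m <= a to 4 a^lambda,
   lambda = log_p h, is an elementary but tight real inequality, proved by
   convexity of x |-> ln (1 + e^x) between its two endpoints. *)

From Stdlib Require Import Reals Arith List Znumtheory ArithRing Lra Lia.
From mathcomp Require all_boot zify.
Open Scope R_scope.

Lemma INR_min m n : INR (Nat.min m n) = Rmin (INR m) (INR n).
Proof.
  destruct (Nat.le_ge_cases m n) as [Hmn | Hnm].
  - rewrite Nat.min_l, Rmin_left by (try apply le_INR; exact Hmn). reflexivity.
  - rewrite Nat.min_r, Rmin_right by (try apply le_INR; exact Hnm). reflexivity.
Qed.

Lemma exp_le_exp x y : x <= y -> exp x <= exp y.
Proof. intros [Hxy | <-]; [left; exact (exp_increasing x y Hxy) | right; reflexivity]. Qed.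

Lemma ln_le x y : 0 < x -> x <= y -> ln x <= ln y.
Proof. intros Hx [Hxy | <-]; [left; exact (ln_increasing x y Hx Hxy) | right; reflexivity]. Qed.

Lemma ln_le_inv x y : 0 < x -> 0 < y -> ln x <= ln y -> x <= y.
Proof. intros Hx Hy L. rewrite <- (exp_ln x Hx), <- (exp_ln y Hy). exact (exp_le_exp _ _ L). Qed.

Lemma ln_le_sub1 x : 0 < x -> ln x <= x - 1.
Proof. intros Hx. pose proof (exp_ineq1_le (ln x)) as E. rewrite exp_ln in E by exact Hx. lra. Qed.

Lemma ln_div x y : 0 < x -> 0 < y -> ln (x / y) = ln x - ln y.
Proof. intros Hx Hy. unfold Rdiv. rewrite ln_mult, ln_Rinv; auto with real. Qed.

Lemma ln_2_le : ln 2 <= 3 / 4.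
Proof.
  assert (E : 2 <= (35 / 32) ^ 8) by (simpl; lra).
  apply ln_le in E; [|lra]. rewrite ln_pow in E by lra.
  pose proof (ln_le_sub1 (35 / 32)). simpl INR in E. lra.
Qed.

Lemma ln_le_tangent m y : 0 < m -> 0 < y -> ln y <= ln m + y / m - 1.
Proof.
  intros Hm Hy. pose proof (ln_le_sub1 (y / m)) as L.
  rewrite ln_div in L by assumption.
  enough (0 < y / m) by lra. apply Rdiv_lt_0_compat; assumption.
Qed.

Lemma Rpower_le_affine x s : 0 < x -> 0 <= s <= 1 -> Rpower x s <= s * x + (1 - s).
Proof.
  intros Hx Hs. set (m := s * x + (1 - s)).
  assert (Hm : 0 < m).
  { assert (0 <= s * x) by (apply Rmult_le_pos; lra).
    unfold m. destruct (Rle_lt_or_eq_dec s 1 (proj2 Hs)) as [Hlt | ->]; lra. }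
  apply ln_le_inv; [apply exp_pos | exact Hm |]. rewrite ln_Rpower.
  pose proof (ln_le_tangent m x Hm Hx) as Tx.
  pose proof (ln_le_tangent m 1 Hm ltac:(lra)) as T1. rewrite ln_1 in T1.
  assert (E : s * (x / m) + (1 - s) * (1 / m) = 1) by (unfold m in *; field; lra).
  assert (s * ln x <= s * (ln m + x / m - 1)) by (apply Rmult_le_compat_l; lra).
  assert (0 <= (1 - s) * (ln m + 1 / m - 1)) by (apply Rmult_le_pos; lra).
  nra.
Qed.

Lemma Rpower_add1_le_mid A s : 0 < A -> 0 <= s <= 1 ->
  Rpower A s + 1 <= 2 * Rpower ((A + 1) / 2) s.
Proof.
  intros HA Hs. set (m := (A + 1) / 2). assert (Hm : 0 < m) by (unfold m; lra).
  assert (Hinv : Rpower (/ m) s = / Rpower m s).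
  { unfold Rpower. rewrite ln_Rinv, <- exp_Ropp by exact Hm. f_equal. ring. }
  pose proof (Rpower_le_affine (A / m) s ltac:(apply Rdiv_lt_0_compat; lra) Hs) as BA.
  pose proof (Rpower_le_affine (/ m) s ltac:(apply Rinv_0_lt_compat; lra) Hs) as B1.
  unfold Rdiv in BA. rewrite <- Rpower_mult_distr in BA by (auto with real).
  rewrite Hinv in BA, B1.
  assert (Hpos : 0 < Rpower m s) by apply exp_pos.
  assert (Hsum : s * (A * / m) + (1 - s) + (s * / m + (1 - s)) = 2) by (unfold m in *; field; lra).
  apply (Rmult_le_reg_r (/ Rpower m s)); [auto with real|].
  replace (2 * Rpower m s * / Rpower m s) with 2 by (field; lra). nra.
Qed.

Lemma ln_div_ln_bounds r A : 1 < r <= A -> 0 <= ln r / ln A <= 1 /\ ln r / ln A * ln A = ln r.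
Proof.
  intros Hr.
  assert (HA : 0 < ln A) by (rewrite <- ln_1; apply ln_increasing; lra).
  assert (Hr0 : 0 < ln r) by (rewrite <- ln_1; apply ln_increasing; lra).
  assert (ln r <= ln A) by (apply ln_le; lra).
  assert (E : ln r / ln A * ln A = ln r) by (field; lra).
  split; [split; [|nra] | exact E].
  unfold Rdiv. apply Rmult_le_pos; [lra | left; apply Rinv_0_lt_compat; exact HA].
Qed.

Lemma ln_succ_le_interp A r : 1 < r <= A ->
  ln (r + 1) <= ln 2 + ln r / ln A * ln ((A + 1) / 2).
Proof.
  intros Hr. destruct (ln_div_ln_bounds r A Hr) as [Hs Es].
  set (s := ln r / ln A) in *.
  pose proof (Rpower_add1_le_mid A s ltac:(lra) Hs) as M.
  replace (Rpower A s) with r in M by (unfold Rpower; rewrite Es, exp_ln; lra).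
  apply ln_le in M; [|lra]. rewrite ln_mult, ln_Rpower in M by (try apply exp_pos; lra).
  exact M.
Qed.

Section Exponent.
Variable P : R.
Hypothesis P_ge3 : 3 <= P.
Let H := (P + 1) / 2.
Let lam := ln H / ln P.

Lemma ln_P_pos : 0 < ln P.
Proof. rewrite <- ln_1. apply ln_increasing; lra. Qed.

Lemma lam_mul_ln_P : lam * ln P = ln H.
Proof. unfold lam. field. pose proof ln_P_pos. lra. Qed.

Lemma lam_ge0 : 0 <= lam.
Proof.
  unfold lam, Rdiv. apply Rmult_le_pos.
  - rewrite <- ln_1. apply ln_le; unfold H; lra.
  - left. apply Rinv_0_lt_compat, ln_P_pos.
Qed.

Lemma lam_le1 : lam <= 1.
Proof.
  pose proof ln_P_pos. pose proof lam_mul_ln_P.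
  assert (ln H <= ln P) by (apply ln_le; unfold H; lra). nra.
Qed.

Lemma P_div_H_le2 : P / H <= 2.
Proof. unfold H. apply (Rmult_le_reg_r ((P + 1) / 2)); [lra|]. field_simplify; lra. Qed.

Lemma ln_P_sub_ln_H_le : ln P - ln H <= ln 2.
Proof.
  rewrite <- ln_div by (unfold H; lra). apply ln_le; [|exact P_div_H_le2].
  apply Rdiv_lt_0_compat; unfold H; lra.
Qed.

(* With X = ln (P/2): ln H >= X, ln (H - 1) >= X - 1/(P-1) and X/(P-1) <= 1/4 < (ln 2)^2. *)
Lemma ln_P_le_endpoint : ln P <= 2 * ln 2 + lam * ln (H - 1).
Proof.
  pose proof ln_P_pos as LP. pose proof ln_lt_2 as L2.
  set (X := ln P - ln 2).
  assert (HX : X <= (P - 1) / 4).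
  { assert (E : X = ln (P / 4) + ln 2).
    { unfold X. rewrite ln_div by lra. replace 4 with (2 * 2) by ring. rewrite ln_mult; lra. }
    pose proof (ln_le_sub1 (P / 4) ltac:(lra)). pose proof ln_2_le. lra. }
  assert (X0 : 0 <= X) by (unfold X; rewrite <- ln_div by lra; rewrite <- ln_1; apply ln_le; lra).
  assert (XH : X <= ln H) by (unfold X; rewrite <- ln_div by lra; apply ln_le; unfold H; lra).
  assert (LH1 : 0 <= ln (H - 1)) by (rewrite <- ln_1; apply ln_le; unfold H; lra).
  set (w := 1 / (P - 1)).
  assert (XH1 : X - w <= ln (H - 1)).
  { replace (H - 1) with ((P - 1) / 2) by (unfold H; field). rewrite ln_div by lra.
    pose proof (ln_le_tangent (P - 1) P ltac:(lra) ltac:(lra)).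
    assert (P / (P - 1) - 1 = w) by (unfold w; field; lra). unfold X. lra. }
  assert (Xw : X * w <= 1 / 4).
  { unfold w. apply (Rmult_le_reg_r (P - 1)); [lra|]. field_simplify; lra. }
  apply (Rmult_le_reg_r (ln P)); [exact LP|].
  replace ((2 * ln 2 + lam * ln (H - 1)) * ln P) with (2 * ln 2 * ln P + ln H * ln (H - 1))
    by (rewrite <- lam_mul_ln_P; ring).
  replace (ln P) with (X + ln 2) by (unfold X; ring).
  assert (X * ln (H - 1) <= ln H * ln (H - 1)) by (apply Rmult_le_compat_r; lra).
  assert (X * (X - w) <= X * ln (H - 1)) by (apply Rmult_le_compat_l; lra).
  nra.
Qed.

(* In logarithms the claim compares ln (1 + e^x), convex in x = ln r, with an affine
   function of x, so it suffices to check it at r = 1 and at r = H - 1. *)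
Lemma succ_mul_le_Rpower r : 1 <= r <= H - 1 -> (r + 1) * (P / H) <= 4 * Rpower r lam.
Proof.
  intros Hr. pose proof ln_P_sub_ln_H_le as PH.
  assert (HH : 0 < H) by (unfold H; lra).
  apply ln_le_inv.
  - apply Rmult_lt_0_compat; [lra | apply Rdiv_lt_0_compat; lra].
  - pose proof (exp_pos (lam * ln r)). unfold Rpower. lra.
  - rewrite ln_mult, ln_div, ln_mult, ln_Rpower by (try apply Rdiv_lt_0_compat; try apply exp_pos; lra).
    replace (ln 4) with (2 * ln 2) by (replace 4 with (2 * 2) by ring; rewrite ln_mult; lra).
    destruct (Rle_lt_or_eq_dec 1 r (proj1 Hr)) as [Hr1 | <-].
    + pose proof (ln_succ_le_interp (H - 1) r (conj Hr1 (proj2 Hr))) as I.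
      replace ((H - 1 + 1) / 2) with (H / 2) in I by field.
      rewrite ln_div in I by lra.
      destruct (ln_div_ln_bounds r (H - 1) (conj Hr1 (proj2 Hr))) as [Hs Es].
      set (s := ln r / ln (H - 1)) in *.
      pose proof ln_P_le_endpoint as EP.
      assert (s * ln P <= s * (2 * ln 2 + lam * ln (H - 1))) by (apply Rmult_le_compat_l; lra).
      assert (0 <= (1 - s) * (ln 2 - (ln P - ln H))) by (apply Rmult_le_pos; lra).
      replace (lam * ln r) with (s * (lam * ln (H - 1))) by (rewrite <- Es; ring).
      nra.
    + rewrite ln_1. replace (1 + 1) with 2 by ring. lra.
Qed.

Lemma Rmin_succ_mul_le_Rpower r : 1 <= r -> Rmin H (r + 1) * (P / H) <= 4 * Rpower r lam.
Proof.
  intros Hr. destruct (Rle_lt_dec r (H - 1)) as [Hle | Hgt].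
  - rewrite Rmin_right by lra. apply succ_mul_le_Rpower; lra.
  - rewrite Rmin_left by lra.
    pose proof (succ_mul_le_Rpower (H - 1) ltac:(unfold H in *; lra)) as K.
    replace (H - 1 + 1) with H in K by ring.
    pose proof (Rle_Rpower_l (H - 1) r lam lam_ge0 ltac:(unfold H in *; lra)). lra.
Qed.

Lemma le_mul_Rpower y : 1 <= y <= P -> y <= P / H * Rpower y lam.
Proof.
  intros Hy. pose proof lam_le1. pose proof lam_mul_ln_P.
  apply ln_le_inv; [lra | apply Rmult_lt_0_compat; [apply Rdiv_lt_0_compat; unfold H; lra | apply exp_pos] |].
  rewrite ln_mult, ln_div, ln_Rpower by (try apply Rdiv_lt_0_compat; try apply exp_pos; unfold H; lra).
  assert ((1 - lam) * ln y <= (1 - lam) * ln P) by (apply Rmult_le_compat_l; [lra | apply ln_le; lra]).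
  nra.
Qed.

Lemma Rpower_pow_lam m : Rpower (P ^ m) lam = H ^ m.
Proof.
  rewrite <- (Rpower_pow m H) by (unfold H; lra).
  unfold Rpower at 1. rewrite ln_pow by lra.
  unfold Rpower. f_equal. rewrite <- lam_mul_ln_P. ring.
Qed.

Lemma le_4_Rpower a : 1 <= a <= P -> a <= 4 * Rpower a lam.
Proof.
  intros Ha. pose proof (le_mul_Rpower a Ha). pose proof P_div_H_le2.
  pose proof (exp_pos (lam * ln a)). unfold Rpower in *. nra.
Qed.

Lemma mul_pow_Rmin_le_Rpower d r m a : 1 <= d <= P -> 1 <= r -> r * d * P ^ m <= a ->
  d * H ^ m * Rmin H (r + 1) <= 4 * Rpower a lam.
Proof.
  intros Hd Hr Ha.
  assert (HPm : 0 < P ^ m) by (apply pow_lt; lra).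
  assert (HHm : 0 < H ^ m) by (apply pow_lt; unfold H; lra).
  assert (Hmin : 0 <= Rmin H (r + 1)) by (apply Rmin_glb; unfold H; lra).
  assert (Mono : Rpower (r * d * P ^ m) lam <= Rpower a lam).
  { apply Rle_Rpower_l; [exact lam_ge0 | split; [|exact Ha]].
    apply Rmult_lt_0_compat; [apply Rmult_lt_0_compat|]; lra. }
  rewrite <- !Rpower_mult_distr, Rpower_pow_lam in Mono by (try apply Rmult_lt_0_compat; lra).
  pose proof (le_mul_Rpower d Hd) as D.
  pose proof (Rmin_succ_mul_le_Rpower r Hr) as C.
  assert (0 < Rpower d lam) by apply exp_pos.
  assert (d * H ^ m * Rmin H (r + 1) <= Rpower d lam * H ^ m * (Rmin H (r + 1) * (P / H))).
  { replace (Rpower d lam * H ^ m * (Rmin H (r + 1) * (P / H)))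
      with ((P / H * Rpower d lam) * H ^ m * Rmin H (r + 1)) by ring.
    apply Rmult_le_compat_r; [exact Hmin|]. apply Rmult_le_compat_r; lra. }
  assert (Rpower d lam * H ^ m * (Rmin H (r + 1) * (P / H)) <= Rpower d lam * H ^ m * (4 * Rpower r lam)).
  { apply Rmult_le_compat_l; [|exact C]. apply Rmult_le_pos; lra. }
  lra.
Qed.
End Exponent.

Module SmallDigits.
Import all_boot zify.
Local Open Scope nat_scope.
Local Set Implicit Arguments.
Local Unset Strict Implicit.

(* [ring] sees through [addn] and [muln] only once they are unfolded, and powers must be expanded. *)
Ltac ring_nat := rewrite ?expnS ?expn0 /addn /muln /=; ring.

Lemma expn_1add_cubic n y : exists z, (1 + y) ^ n = 1 + n * y + 'C(n, 2) * y ^ 2 + z * y ^ 3.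
Proof.
  elim: n => [|n [z IH]]; first by exists 0; rewrite bin0n.
  exists ('C(n, 2) + z + z * y). rewrite expnS IH binS bin1. ring_nat.
Qed.

Lemma expn_1add_sq n y : exists w, (1 + y) ^ n = 1 + n * y + w * y ^ 2.
Proof. have [z ->] := expn_1add_cubic n y. exists ('C(n, 2) + z * y). ring_nat. Qed.

Lemma sum_nat_of_bool_count (a : pred nat) r : \sum_(e <- r) (a e : nat) = count a r.
Proof. by rewrite -sum1_count [RHS]big_mkcond; apply: eq_bigr => e _; case: (a e). Qed.

Lemma big_nat_mul_blocks (f : nat -> nat) q K :
  \sum_(0 <= x < q * K) f x = \sum_(0 <= s < K) \sum_(0 <= e < q) f (s + e * K).
Proof.
  elim: q => [|q IH].
  - rewrite mul0n big_geq // big1 // => s _. by rewrite big_geq.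
  - rewrite mulSnr (@big_cat_nat _ _ _ (q * K)) ?leq_addr //= IH.
    rewrite -{1}(add0n (q * K)) big_addn addKn -big_split /=.
    by apply: eq_bigr => s _; rewrite big_nat_recr //= addnC.
Qed.

Lemma divn_Nat_div n k : 0 < k -> n %/ k = Nat.div n k.
Proof.
  move=> k_gt0. apply: PeanoNat.Nat.div_unique; last by rewrite {1}(divn_eq n k) mulnC.
  by apply/ltP; rewrite ltn_pmod.
Qed.

Lemma modn_Nat_mod n k : 0 < k -> n %% k = Nat.modulo n k.
Proof.
  move=> k_gt0. apply: (PeanoNat.Nat.mod_unique _ _ (n %/ k)); last by rewrite {1}(divn_eq n k) mulnC.
  by apply/ltP; rewrite ltn_pmod.
Qed.

Lemma expn_Nat_pow m n : Nat.pow m n = m ^ n.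
Proof. by elim: n => [|n IH] //=; rewrite IH expnS. Qed.

Lemma length_filter_seq (f : nat -> bool) a :
  length (List.filter f (List.seq 0 a)) = \sum_(0 <= s < a) (f s : nat).
Proof.
  elim: a => [|a IH]; first by rewrite big_geq.
  rewrite List.seq_S List.filter_app List.length_app IH big_nat_recr //=.
  by case: (f a).
Qed.

Section WindowCount.
Variables p h alpha : nat.
Hypothesis p_prime : prime p.
Hypothesis h_half : 2 * h = p + 1.
Hypothesis p_ndvd_alpha : ~~ (p %| alpha).
Hypothesis alpha_gt1 : 1 < alpha.

Lemma p_gt2 : 2 < p.
Proof. have := prime_gt1 p_prime. lia. Qed.

Lemma p_gt0 : 0 < p.
Proof. exact: prime_gt0. Qed.

Lemma expn_prime_1add k u : 0 < k -> ~~ (p %| u) ->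
  exists u', (1 + p ^ k * u) ^ p = 1 + p ^ k.+1 * u' /\ ~~ (p %| u').
Proof.
  move=> k_gt0 pNu.
  have [z ->] := expn_1add_cubic p (p ^ k * u).
  have /dvdnP [c ->] : p %| 'C(p, 2) by apply: prime_dvd_bin => //; rewrite /= p_gt2.
  rewrite (expnS p k).
  have -> : p ^ k = p * p ^ k.-1 by rewrite -expnS prednK.
  set Q := p ^ k.-1.
  exists (u + p * (c * Q * u ^ 2 + z * (Q * Q) * u ^ 3)); split.
  - ring_nat.
  - by rewrite dvdn_addl // dvdn_mulr.
Qed.

Definition nu := logn p (alpha ^ p.-1 - 1).

Definition period m := p.-1 * p ^ m.

Lemma alpha_pm1_gt1 : 1 < alpha ^ p.-1.
Proof. rewrite -(exp1n p.-1) ltn_exp2r //. have := p_gt2. lia. Qed.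

Lemma nu_gt0 : 0 < nu.
Proof.
  rewrite /nu -(pfactor_dvdn 1 p_prime); last by have := alpha_pm1_gt1; lia.
  rewrite expn1 -(@Gauss_dvdl _ _ alpha); last by rewrite prime_coprime.
  rewrite mulnBl -expnSr prednK ?p_gt0 // mul1n -eqn_mod_dvd; last first.
    by rewrite -{1}(expn1 alpha) leq_pexp2l ?p_gt0 // ltnW.
  by apply/eqP; apply: fermat_little.
Qed.

Lemma expn_period m : exists u, alpha ^ period m = 1 + p ^ (nu + m) * u /\ ~~ (p %| u).
Proof.
  elim: m => [|m [u [Eu pNu]]].
  - have b0 : 0 < alpha ^ p.-1 - 1 by have := alpha_pm1_gt1; lia.
    have [u cu Eu] := pfactor_coprime p_prime b0.
    exists u; split; last by rewrite -prime_coprime.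
    rewrite /period expn0 muln1 addn0 /nu mulnC -Eu. have := alpha_pm1_gt1. lia.
  - have [u' [E' pNu']] := expn_prime_1add (ltn_addr m nu_gt0) pNu.
    exists u'; split => //.
    by rewrite /period expnS mulnCA mulnC expnM -/(period m) Eu E' addnS.
Qed.

Lemma expn_add_mul_period m : exists u, ~~ (p %| u) /\ forall s e, exists w,
  alpha ^ (s + e * period m) = alpha ^ s + alpha ^ s * e * u * p ^ (nu + m) + w * p ^ (nu + m).+1.
Proof.
  have [u [Eu pNu]] := expn_period m.
  exists u; split => // s e.
  have [w Ew] := expn_1add_sq e (p ^ (nu + m) * u).
  exists (alpha ^ s * w * p ^ (nu + m).-1 * u ^ 2).
  rewrite expnD (mulnC e) expnM Eu Ew (expnS p (nu + m)).
  have -> : p ^ (nu + m) = p * p ^ (nu + m).-1 by rewrite -expnS prednK // ltn_addr // nu_gt0.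
  move: (p ^ (nu + m).-1) => Q. ring_nat.
Qed.

Definition digit n i := n %/ p ^ i %% p.

Lemma digit_eq_mod X Y K i : X = Y %[mod p ^ K] -> i < K -> digit X i = digit Y i.
Proof.
  move=> E iK. rewrite /digit !modn_divl -expnS.
  have dv : p ^ i.+1 %| p ^ K by rewrite dvdn_exp2l.
  by rewrite -(modn_dvdm X dv) -(modn_dvdm Y dv) E.
Qed.

Lemma digit_add_mul_pow_low Y W k i : i < k -> digit (Y + W * p ^ k) i = digit Y i.
Proof. move=> ik. apply: (digit_eq_mod (K := k)) => //. by rewrite addnC modnMDl. Qed.

Lemma digit_add_mul_pow_high Y W k : digit (Y + W * p ^ k.+1) k = digit Y k.
Proof. apply: (digit_eq_mod (K := k.+1)) => //. by rewrite addnC modnMDl. Qed.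

Lemma digit_add_mul_pow Y Z k : digit (Y + Z * p ^ k) k = (digit Y k + Z) %% p.
Proof. by rewrite /digit addnC divnMDl ?expn_gt0 ?p_gt0 // modnDml addnC. Qed.

Definition small_window m s := all (fun i => 2 * digit (alpha ^ s) (nu + i) < p) (iota 0 m).

Lemma small_windowS m s :
  small_window m.+1 s = small_window m s && (2 * digit (alpha ^ s) (nu + m) < p).
Proof. by rewrite /small_window -(addn1 m) iotaD all_cat /= andbT. Qed.

Lemma small_window_periodic m s e : small_window m (s + e * period m) = small_window m s.
Proof.
  have [u [_ Hper]] := expn_add_mul_period m.
  have [w Ew] := Hper s e.
  apply: eq_in_all => i; rewrite mem_iota add0n => im /=.
  rewrite Ew -addnA.
  have -> : alpha ^ s * e * u * p ^ (nu + m) + w * p ^ (nu + m).+1 =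
            (alpha ^ s * e * u + w * p) * p ^ (nu + m) by rewrite expnS; ring_nat.
  by rewrite digit_add_mul_pow_low // ltn_add2l.
Qed.

Lemma digit_add_mul_period m : exists c, coprime p c /\ forall s e,
  digit (alpha ^ (s + e * period m)) (nu + m) = (digit (alpha ^ s) (nu + m) + e * (alpha ^ s * c)) %% p.
Proof.
  have [u [pNu Hper]] := expn_add_mul_period m.
  exists u; split; first by rewrite prime_coprime.
  move=> s e. have [w ->] := Hper s e.
  by rewrite digit_add_mul_pow_high digit_add_mul_pow mulnCA mulnA.
Qed.

Lemma mod_add_mul_inj D c x y : coprime p c -> x < p -> y < p ->
  (D + x * c) %% p = (D + y * c) %% p -> x = y.
Proof.
  move=> cop.
  wlog xy : x y / x <= y.
    move=> W xp yp E. case: (leqP x y) => [xy|yx]; first exact: W.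
    by symmetry; apply: W => //; apply: ltnW.
  move=> xp yp /eqP E.
  rewrite eq_sym eqn_mod_dvd in E; last by rewrite leq_add2l leq_mul2r xy orbT.
  rewrite subnDl -mulnBl Gauss_dvdl // in E.
  case: (posnP (y - x)) => [|pos]; first by lia.
  have := dvdn_leq pos E. lia.
Qed.

(* [e |-> (D + e c) mod p] is injective on [0, p) and a small residue lies in [0, h). *)
Lemma count_small_residues D c : coprime p c ->
  count (fun e => 2 * ((D + e * c) %% p) < p) (iota 0 p) <= h.
Proof.
  move=> cop. rewrite -size_filter.
  rewrite -(size_map (fun e => (D + e * c) %% p)) -(size_iota 0 h).
  apply: uniq_leq_size.
  - rewrite map_inj_in_uniq; first by rewrite filter_uniq // iota_uniq.
    move=> x y; rewrite !mem_filter !mem_iota /= => /andP[_ xp] /andP[_ yp].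
    exact: mod_add_mul_inj.
  - move=> z /mapP [e]; rewrite mem_filter => /andP [He _] ->.
    rewrite mem_iota /= add0n. lia.
Qed.

Lemma count_small_windowS m s q : q <= p ->
  count (fun e => small_window m.+1 (s + e * period m)) (iota 0 q) <= small_window m s * minn h q.
Proof.
  move=> qp. case Ps: (small_window m s); last first.
    rewrite mul0n leqn0 (eq_count (a2 := pred0)) ?count_pred0 // => e.
    by rewrite /= small_windowS small_window_periodic Ps.
  rewrite mul1n leq_min; apply/andP; split; last by rewrite (leq_trans (count_size _ _)) ?size_iota.
  have [c [cop Hc]] := digit_add_mul_period m.
  set small_top := fun e => 2 * digit (alpha ^ (s + e * period m)) (nu + m) < p.
  apply: (@leq_trans (count small_top (iota 0 q))).
    by apply: sub_count => e /=; rewrite small_windowS => /andP [].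
  apply: (@leq_trans (count small_top (iota 0 p))).
    by rewrite -(subnKC qp) iotaD count_cat leq_addr.
  rewrite (eq_count (a2 := fun e => 2 * ((digit (alpha ^ s) (nu + m) + e * (alpha ^ s * c)) %% p) < p)).
    by apply: count_small_residues; rewrite coprimeMr cop andbT coprimeXr // prime_coprime.
  by move=> e; rewrite /small_top /= Hc.
Qed.

Definition window_count m a := \sum_(0 <= s < a) small_window m s.

Lemma window_count_mono m a b : a <= b -> window_count m a <= window_count m b.
Proof. by move=> ab; rewrite /window_count (@big_cat_nat _ _ _ a 0 b) //= leq_addr. Qed.

Lemma window_countS_le m q : q <= p ->
  window_count m.+1 (q * period m) <= window_count m (period m) * minn h q.
Proof.
  move=> qp. rewrite /window_count big_nat_mul_blocks big_distrl /=.
  apply: leq_sum => s _.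
  by rewrite /index_iota subn0 sum_nat_of_bool_count count_small_windowS.
Qed.

Lemma window_count_period m : window_count m (period m) <= p.-1 * h ^ m.
Proof.
  elim: m => [|m IH].
  - rewrite /window_count /period expn0 !muln1 (eq_bigr (fun _ => 1)) //.
    by rewrite sum_nat_const_nat subn0 muln1.
  - have -> : period m.+1 = p * period m by rewrite /period expnS mulnCA.
    apply: (leq_trans (window_countS_le m (leqnn p))).
    rewrite (minn_idPl _); last by lia.
    by rewrite expnS mulnCA mulnC leq_mul2l IH orbT.
Qed.

Lemma window_count_le a : p.-1 < a -> exists m q, [/\ 2 <= q <= p, q.-1 * period m < a &
  window_count m.+1 a <= p.-1 * h ^ m * minn h q].
Proof.
  move=> pa.
  have exm : exists m, a <= period m.+1.
  { exists a. have := ltn_expl a.+1 (prime_gt1 p_prime) => lt_pa.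
    apply: (leq_trans _ (leq_pmull _ _)); [lia | have := p_gt2; lia]. }
  case: (ex_minnP exm) => m am minm.
  have ma : period m < a.
  { case: m am minm => [|k] am minm; first by rewrite /period expn0 muln1.
    by rewrite ltnNge; apply/negP => /minm; lia. }
  have exq : exists q, a <= q * period m by exists p; rewrite /period mulnCA -expnS.
  case: (ex_minnP exq) => q aq minq.
  have qp : q <= p by apply: minq; rewrite /period mulnCA -expnS.
  have q2 : 2 <= q by case: q aq {minq qp} => [|[|q]]; rewrite ?mul0n ?mul1n //; lia.
  exists m, q; split.
  - by rewrite q2 qp.
  - by rewrite ltnNge; apply/negP => /minq; lia.
  - apply: (leq_trans (window_count_mono m.+1 aq)); apply: (leq_trans (window_countS_le m qp)).
    by rewrite leq_mul2r window_count_period orbT.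
Qed.

Lemma digit_in_digits_aux f n i : n <= f -> digit n i = 0 \/ List.In (digit n i) (digits_aux f p n).
Proof.
  elim: f n i => [|f IH] n i nf.
  - have -> : n = 0 by lia.
    by left; rewrite /digit div0n mod0n.
  - case: n nf => [|n] nf; first by left; rewrite /digit div0n mod0n.
    rewrite [digits_aux _ _ _]/= -(modn_Nat_mod _ p_gt0) -(divn_Nat_div _ p_gt0).
    case: i => [|i]; first by right; left; rewrite /digit expn0 divn1.
    have -> : digit n.+1 i.+1 = digit (n.+1 %/ p) i by rewrite /digit expnS divnMA.
    have /(IH _ i) [->|Hin] : n.+1 %/ p <= f by have := ltn_Pdiv (prime_gt1 p_prime) (ltn0Sn n); lia.
    + by left.
    + by right; right.
Qed.

Lemma no_large_digits n : num_large_digits p n = 0 -> forall i, 2 * digit n i < p.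
Proof.
  move=> /List.length_zero_iff_nil no_large i.
  case: (digit_in_digits_aux i (leqnn n)) => [->|Hin]; first by rewrite muln0 p_gt0.
  case E: (large_digit p (digit n i)).
  - have : List.In (digit n i) (List.filter (large_digit p) (digits p n)) by apply/List.filter_In.
    by rewrite no_large.
  - by move: E; rewrite /large_digit => /PeanoNat.Nat.leb_gt /ltP.
Qed.

Lemma S_count_le_window_count m a : S_count alpha p 1 a <= window_count m a.
Proof.
  rewrite /S_count length_filter_seq. apply: leq_sum => s _.
  case Hs: (Nat.ltb _ _) => //.
  have /no_large_digits small : num_large_digits p (alpha ^ s) = 0.
    by move: Hs => /PeanoNat.Nat.ltb_lt; rewrite expn_Nat_pow; lia.
  by have -> : small_window m s by apply/allP => i _; apply: small.
Qed.
End WindowCount.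

Lemma prime_Z_of_nat p : Znumtheory.prime (BinInt.Z.of_nat p) -> prime p.
Proof.
  move=> Hp. apply/primeP; split.
  - by have := Znumtheory.prime_ge_2 _ Hp; lia.
  - move=> x /dvdnP [k Hk].
    have Hd : BinInt.Z.divide (BinInt.Z.of_nat x) (BinInt.Z.of_nat p).
      by exists (BinInt.Z.of_nat k); rewrite Hk; apply: Znat.Nat2Z.inj_mul.
    have := Znumtheory.prime_divisors _ Hp _ Hd => x1p.
    have [->|->] : x = 1 \/ x = p by lia.
    + by rewrite eqxx.
    + by rewrite eqxx orbT.
Qed.

Lemma S_count_le_window_bound p h alpha a :
  Znumtheory.prime (BinInt.Z.of_nat p) -> (2 * h = p + 1)%coq_nat -> Nat.gcd p alpha = 1 ->
  (1 < alpha)%coq_nat -> (p - 1 < a)%coq_nat ->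
  exists m q : nat, (2 <= q)%coq_nat /\ (q <= p)%coq_nat /\
    ((q - 1) * (p - 1) * Nat.pow p m <= a)%coq_nat /\
    (S_count alpha p 1 a <= (p - 1) * Nat.pow h m * Nat.min h q)%coq_nat.
Proof.
  move=> /prime_Z_of_nat p_prime h_half gcd1 /ltP alpha_gt1 /ltP pa.
  have p_ndvd : ~~ (p %| alpha).
  { apply/negP => /dvdnP [c Ec].
    have : PeanoNat.Nat.divide p 1.
      by rewrite -gcd1; apply: PeanoNat.Nat.gcd_greatest; [exists 1; lia | exists c].
    by move/PeanoNat.Nat.divide_1_r => p1; move: (prime_gt1 p_prime); rewrite p1. }
  have pa' : p.-1 < a by rewrite -subn1.
  have [m [q [/andP [q2 qp] qa Sq]]] := window_count_le p_prime h_half p_ndvd alpha_gt1 pa'.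
  exists m, q; rewrite !expn_Nat_pow; split; [|split; [|split]]; apply/leP => //.
  - by move: qa; rewrite /period -!subn1 mulnA; lia.
  - apply: (leq_trans (S_count_le_window_count p_prime h_half p_ndvd alpha_gt1 m.+1 a)).
    have <- : minn h q = Nat.min h q by lia.
    by rewrite subn1.
Qed.
End SmallDigits.

Theorem theorem2p7 (p alpha : nat) :
  prime (Z.of_nat p) -> Nat.Odd p -> (1 < alpha)%nat -> Nat.gcd p alpha = 1%nat ->
  forall a : nat, (1 <= a)%nat ->
    INR (S_count alpha p 1 a) <=
      4 * Rpower (INR a) (ln ((INR p + 1) / 2) / ln (INR p)).
Proof.
  intros Hp [k Hk] Halpha Hgcd a Ha.
  assert (Hp3 : (3 <= p)%nat) by (pose proof (prime_ge_2 _ Hp); lia).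
  assert (HP : 3 <= INR p) by (replace 3 with (INR 3) by (simpl; lra); apply le_INR; exact Hp3).
  assert (HA : 1 <= INR a) by (replace 1 with (INR 1) by reflexivity; apply le_INR; exact Ha).
  destruct (le_lt_dec a (p - 1)) as [Hsmall | Hlarge].
  - apply Rle_trans with (INR a).
    + apply le_INR. unfold S_count. rewrite <- (length_seq a 0) at 2. apply filter_length_le.
    + apply le_4_Rpower; [exact HP |]. split; [exact HA | apply le_INR; lia].
  - destruct (SmallDigits.S_count_le_window_bound (h := S k) Hp ltac:(lia) Hgcd Halpha Hlarge)
      as (m & q & Hq2 & Hqp & Hqa & HS).
    apply le_INR in HS, Hqa.
    rewrite !mult_INR, !pow_INR, INR_min in HS. rewrite !mult_INR, pow_INR in Hqa.
    replace (INR (S k)) with ((INR p + 1) / 2) in HS by (rewrite Hk, S_INR, plus_INR, mult_INR; simpl; lra).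
    replace (INR q) with (INR (q - 1) + 1) in HS by (rewrite minus_INR by lia; simpl; lra).
    eapply Rle_trans; [exact HS |].
    apply mul_pow_Rmin_le_Rpower; [exact HP | | | exact Hqa].
    + rewrite minus_INR by lia. simpl. lra.
    + replace 1 with (INR 1) by reflexivity. apply le_INR. lia.
Qed.
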